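(* Let $\theta>0$ be such that $\Lambda^*_\nu(\theta)=\ln 2$. Then for all $0\le x\le 1$, $$\Lambda^*_\nu(\theta x)\ge (\ln\cosh)^*(x)=\tfrac12\big[(1+x)\ln(1+x)+(1-x)\ln(1-x)\big].$$
   Context: $\nu$ is the symmetric exponential distribution on $\mathbb{R}$ with density $\frac12 e^{-|x|}$, and its Cramer transform is $\Lambda^*_\nu(x)=\sup_y\{xy-\ln\int e^{yz}d\nu(z)\}=\sqrt{x^2+1}-1-\ln\frac{\sqrt{x^2+1}+1}{2}$. $(\ln\cosh)^*$ is the Legendre transform $f^*(x)=\sup_y\{xy-f(y)\}$ of $\ln\cosh$; at $x=1$ it equals $\ln 2$ (with $0\ln 0=0$). *)

From Stdlib Require Import Reals.
From Coquelicot Require Import Coquelicot.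
Open Scope R_scope.

(* Cramer transform of the symmetric exponential law nu (density e^{-|x|}/2),
   in the closed form given in the paper's context. *)
Definition Lambda_star_nu (x : R) : R :=
  sqrt (x ^ 2 + 1) - 1 - ln ((sqrt (x ^ 2 + 1) + 1) / 2).

Definition legendre (f : R -> R) (x : R) : Rbar :=
  Lub_Rbar (fun v => exists y : R, v = x * y - f y).

Definition ln_cosh (y : R) : R := ln (cosh y).

From Stdlib Require Import Reals Lra.
From Coquelicot Require Import Coquelicot.
Open Scope R_scope.

(* The conjugate (ln cosh)^* comes from Young's inequality for exp, with equality
   at y = artanh x (approached as y -> +-oo when |x| = 1).
   The gap g(x) = Lambda*(theta x) - (ln cosh)^*(x) vanishes at 0, and at 1 by the
   choice of theta, and g'(0) = 0.  Its second derivative has the sign of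
   theta^2 + 1 - 2 rho^2 - rho with rho = sqrt (1 + theta^2 x^2) increasing in x, so
   g is convex, then concave on [0, 1]; such a function cannot dip below its zero
   boundary values. *)

Definition rademacher_rate (x : R) : R :=
  (1/2) * ((1 + x) * ln (1 + x) + (1 - x) * ln (1 - x)).

Lemma ln_le_sub1 (w : R) : 0 < w -> ln w <= w - 1.
Proof.
  intros Hw. pose proof (exp_ineq1_le (ln w)) as H. rewrite exp_ln in H; lra.
Qed.

Lemma legendre_eq_Finite (f : R -> R) (x v : R) :
  (forall y, x * y - f y <= v) ->
  (forall eps, 0 < eps -> exists y, v - eps < x * y - f y) ->
  legendre f x = Finite v.
Proof.
  intros Hub Happrox. apply is_lub_Rbar_unique. split.
  - intros w [y ->]. apply Hub.
  - intros [M | | ] Hb; simpl; auto.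
    + apply Rnot_lt_le. intros HM.
      destruct (Happrox (v - M)) as [y Hy]; [lra|].
      specialize (Hb _ (ex_intro _ y eq_refl)). simpl in Hb. lra.
    + destruct (Happrox 1 Rlt_0_1) as [y _].
      exact (Hb _ (ex_intro _ y eq_refl)).
Qed.

(* Young's inequality for the pair (exp, x ln x - x); at p = 0 it uses ln 0 = 0. *)
Lemma young_exp (p t : R) : 0 <= p -> p * t <= p * ln p - p + exp t.
Proof.
  intros [Hp | <-]; [|pose proof (exp_pos t); lra].
  pose proof (exp_ineq1_le (t - ln p)) as H.
  unfold Rminus in H. rewrite exp_plus, exp_Ropp, exp_ln in H by exact Hp.
  apply (Rmult_le_compat_l p) in H; [|lra].
  replace (p * (exp t * / p)) with (exp t) in H by (field; lra).
  lra.
Qed.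

Lemma half_mul_ln_half (u : R) : 0 <= u -> u / 2 * ln (u / 2) = u / 2 * (ln u - ln 2).
Proof.
  intros [Hu | <-]; [rewrite ln_div by lra; reflexivity | lra].
Qed.

Lemma cosh_pos (y : R) : 0 < cosh y.
Proof. unfold cosh. pose proof (exp_pos y); pose proof (exp_pos (- y)); lra. Qed.

Lemma fenchel_ln_cosh_le (x y : R) : -1 <= x <= 1 ->
  x * y - ln_cosh y <= rademacher_rate x.
Proof.
  intros Hx. unfold ln_cosh.
  set (L := ln (2 * cosh y)).
  assert (HL : L = ln 2 + ln (cosh y)) by (apply ln_mult; [lra | apply cosh_pos]).
  assert (Hsum : exp (y - L) + exp (- y - L) = 1).
  { unfold Rminus. rewrite !exp_plus, exp_Ropp. unfold L.
    rewrite exp_ln by (pose proof (cosh_pos y); lra).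
    unfold cosh. pose proof (exp_pos y); pose proof (exp_pos (- y)). field. lra. }
  pose proof (young_exp ((1 + x) / 2) (y - L) ltac:(lra)) as Yp.
  pose proof (young_exp ((1 - x) / 2) (- y - L) ltac:(lra)) as Yq.
  rewrite half_mul_ln_half in Yp, Yq by lra.
  unfold rademacher_rate. lra.
Qed.

Lemma fenchel_ln_cosh_artanh (x : R) : -1 < x < 1 ->
  let y := (ln (1 + x) - ln (1 - x)) / 2 in
  x * y - ln_cosh y = rademacher_rate x.
Proof.
  intros Hx y.
  set (A := exp (ln (1 + x) / 2)). set (B := exp (ln (1 - x) / 2)).
  assert (Hsq : forall u, 0 < u -> exp (ln u / 2) * exp (ln u / 2) = u).
  { intros u Hu. rewrite <- exp_plus. replace (ln u / 2 + ln u / 2) with (ln u) by field.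
    apply exp_ln, Hu. }
  assert (HA : 0 < A) by apply exp_pos.
  assert (HB : 0 < B) by apply exp_pos.
  assert (HA2 : A * A = 1 + x) by (apply Hsq; lra).
  assert (HB2 : B * B = 1 - x) by (apply Hsq; lra).
  assert (Ey : exp y = A / B).
  { assert (EyB : exp y * B = A).
    { unfold A, B. rewrite <- exp_plus. f_equal. unfold y. field. }
    rewrite <- EyB. field. lra. }
  assert (Hc : cosh y = / (A * B)).
  { unfold cosh. rewrite exp_Ropp, Ey.
    replace (A / B + / (A / B)) with ((A * A + B * B) / (A * B)) by (field; lra).
    rewrite HA2, HB2. field. lra. }
  unfold ln_cosh. rewrite Hc, ln_Rinv, ln_mult by nra. unfold A, B. rewrite !ln_exp.
  unfold rademacher_rate, y. field.
Qed.

Lemma fenchel_ln_cosh_one_approx (eps : R) : 0 < eps ->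
  exists y, ln 2 - eps < y - ln_cosh y.
Proof.
  intros Heps. set (u := eps / 2). exists (- ln u / 2).
  set (y := - ln u / 2).
  assert (Hu : exp (- y) = exp y * u).
  { rewrite <- (exp_ln u) by (unfold u; lra). rewrite <- exp_plus.
    f_equal. unfold y. field. }
  assert (Hc : cosh y = exp y * ((1 + u) / 2)).
  { unfold cosh. rewrite Hu. field. }
  pose proof (ln_le_sub1 (1 + u) ltac:(unfold u; lra)).
  unfold ln_cosh. rewrite Hc, ln_mult, ln_exp, ln_div by (try apply exp_pos; unfold u; lra).
  unfold u in *. lra.
Qed.

Lemma legendre_ln_cosh (x : R) : -1 <= x <= 1 ->
  legendre ln_cosh x = Finite (rademacher_rate x).
Proof.
  intros Hx. apply legendre_eq_Finite; [intros y; apply fenchel_ln_cosh_le, Hx|].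
  intros eps Heps.
  destruct (Rlt_le_dec x 1) as [Hlt1 | Hge1];
    [destruct (Rlt_le_dec (-1) x) as [Hgt | Hle] |].
  - exists ((ln (1 + x) - ln (1 - x)) / 2).
    rewrite (fenchel_ln_cosh_artanh x (conj Hgt Hlt1)). lra.
  - replace x with (-1) by lra.
    destruct (fenchel_ln_cosh_one_approx eps Heps) as [y Hy]. exists (- y).
    unfold ln_cosh, cosh, rademacher_rate in *. rewrite Ropp_involutive.
    replace (1 + -1) with 0 by ring. replace (1 - -1) with 2 by ring.
    rewrite (Rplus_comm (exp (- y))). lra.
  - replace x with 1 by lra.
    destruct (fenchel_ln_cosh_one_approx eps Heps) as [y Hy]. exists y.
    unfold rademacher_rate.
    replace (1 - 1) with 0 by ring. replace (1 + 1) with 2 by ring. lra.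
Qed.

Lemma Rabs_xlnx_le (t : R) : 0 < t <= 1 -> Rabs (t * ln t) <= 2 * sqrt t.
Proof.
  intros Ht. set (s := sqrt t).
  assert (Hs : 0 < s) by (apply sqrt_lt_R0; lra).
  assert (Hss : s * s = t) by (apply sqrt_sqrt; lra).
  assert (Hlt : ln t = 2 * ln s) by (rewrite <- Hss, ln_mult; lra).
  assert (Hls : ln s <= 0).
  { rewrite <- ln_1. apply ln_le; [exact Hs|]. nra. }
  assert (Hinv : - ln s <= / s - 1).
  { rewrite <- ln_Rinv by exact Hs. apply ln_le_sub1, Rinv_0_lt_compat, Hs. }
  assert (Hmul : s * s * (- ln s) <= s * s * (/ s - 1))
    by (apply Rmult_le_compat_l; nra).
  replace (s * s * (/ s - 1)) with (s - s * s) in Hmul by (field; lra).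
  assert (Hneg : t * ln t <= 0) by (rewrite Hlt; nra).
  rewrite Rabs_left1 by exact Hneg. rewrite Hlt, <- Hss. fold s. lra.
Qed.

Lemma continuity_pt_xlnx_0 : continuity_pt (fun t => t * ln t) 0.
Proof.
  intros eps Heps. exists (Rmin 1 (eps / 2 * (eps / 2))). split; [apply Rmin_pos; nra|].
  intros t [_ Hd]. simpl in *. unfold R_dist in *.
  rewrite Rmult_0_l, Rminus_0_r in *.
  destruct (Rlt_le_dec 0 t) as [Ht | Ht].
  - rewrite Rabs_pos_eq in Hd by lra.
    pose proof (Rmin_l 1 (eps / 2 * (eps / 2))). pose proof (Rmin_r 1 (eps / 2 * (eps / 2))).
    assert (Hsqrt : sqrt t < eps / 2).
    { rewrite <- (sqrt_square (eps / 2)) by lra. apply sqrt_lt_1_alt. lra. }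
    pose proof (Rabs_xlnx_le t ltac:(lra)). lra.
  - assert (Hln : ln t = 0).
    { unfold ln. destruct (Rlt_dec 0 t); [exfalso; lra | reflexivity]. }
    rewrite Hln, Rmult_0_r, Rabs_R0. exact Heps.
Qed.

Lemma continuity_pt_rademacher_rate_1 : continuity_pt rademacher_rate 1.
Proof.
  apply continuity_pt_mult; [apply continuity_pt_const; intros ? ?; reflexivity|].
  apply continuity_pt_plus.
  - apply derivable_continuous_pt. exists (ln 2 + 1). apply is_derive_Reals.
    auto_derive; [lra|]. replace (1 + 1) with 2 by ring. field.
  - change (continuity_pt (comp (fun t => t * ln t) (fun x => 1 - x)) 1).
    apply continuity_pt_comp.
    + apply continuity_pt_minus; [apply continuity_pt_const; intros ? ?; reflexivity|].
      apply continuity_pt_id.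
    + replace (1 - 1) with 0 by ring. exact continuity_pt_xlnx_0.
Qed.

Lemma continuity_pt_of_is_derive (f : R -> R) (x l : R) :
  is_derive f x l -> continuity_pt f x.
Proof.
  intros Hd. apply derivable_continuous_pt. exists l. apply is_derive_Reals, Hd.
Qed.

Lemma MVT_is_derive (f df : R -> R) (a b : R) : a < b ->
  (forall c, a < c < b -> is_derive f c (df c)) ->
  (forall c, a <= c <= b -> continuity_pt f c) ->
  exists c, a < c < b /\ f b - f a = df c * (b - a).
Proof.
  intros Hab Hd Hc.
  assert (pr : forall c, a < c < b -> derivable_pt f c).
  { intros c Hc'. exists (df c). apply is_derive_Reals, Hd, Hc'. }
  destruct (MVT f id a b pr (fun c _ => derivable_pt_id c) Hab Hc
              (fun c _ => derivable_continuous_pt _ _ (derivable_pt_id c))) as [c [Hc' E]].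
  exists c. split; [exact Hc'|].
  rewrite derive_pt_id in E.
  assert (D : derive_pt f c (pr c Hc') = df c).
  { apply derive_pt_eq_0, is_derive_Reals, Hd, Hc'. }
  rewrite D in E. unfold id in E. lra.
Qed.

Definition neg_persistent (g : R -> R) (a b : R) : Prop :=
  forall c z, a < c -> c <= z < b -> g c < 0 -> g z < 0.

Lemma neg_at_end_of_derive (g g' : R -> R) (a b : R) :
  (forall c, a < c < b -> is_derive g c (g' c)) ->
  (forall c, a <= c <= b -> continuity_pt g c) ->
  g a = 0 -> neg_persistent g' a b ->
  forall c, a < c <= b -> g c < 0 -> g b < 0.
Proof.
  intros Hd Hcont Ha Hpers c Hc Hgc.
  destruct (MVT_is_derive g g' a c) as [c' [Hc' Ec']];
    [lra | intros; apply Hd; lra | intros; apply Hcont; lra |].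
  assert (Hneg : g' c' < 0) by nra.
  destruct (Req_dec c b) as [<- | Hcb]; [exact Hgc|].
  destruct (MVT_is_derive g g' c b) as [w [Hw Ew]];
    [lra | intros; apply Hd; lra | intros; apply Hcont; lra |].
  assert (g' w < 0) by (apply (Hpers c' w); lra).
  nra.
Qed.

Lemma neg_persistent_of_derive (g g' : R -> R) (a b : R) :
  (forall c, a <= c < b -> is_derive g c (g' c)) ->
  g a = 0 -> neg_persistent g' a b -> neg_persistent g a b.
Proof.
  intros Hd Ha Hpers c z Hac Hcz.
  apply (neg_at_end_of_derive g g' a z); [| | exact Ha | | lra].
  - intros; apply Hd; lra.
  - intros c' ?. apply (continuity_pt_of_is_derive g c' (g' c')), Hd. lra.
  - intros c' z' ? ?. apply Hpers; lra.
Qed.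

(* If [f x < 0], then [f'] is negative somewhere left of [x]; since [f''] can only
   turn negative, [f'] stays negative from there on, forcing [f b < 0]. *)
Lemma ge0_of_neg_persistent_derive2 (f f' f'' : R -> R) (a b : R) :
  (forall c, a <= c < b -> is_derive f c (f' c)) ->
  (forall c, a <= c < b -> is_derive f' c (f'' c)) ->
  continuity_pt f b ->
  f a = 0 -> f b = 0 -> f' a = 0 -> neg_persistent f'' a b ->
  forall x, a <= x <= b -> 0 <= f x.
Proof.
  intros Hf Hf' Hcb Ha Hb Ha' Hpers x Hx.
  apply Rnot_lt_le. intros Hneg.
  assert (Hax : a < x) by (destruct (Req_dec a x) as [<- | ]; lra).
  enough (f b < 0) by lra.
  apply (neg_at_end_of_derive f f' a b) with x; [| | exact Ha | | lra | exact Hneg].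
  - intros; apply Hf; lra.
  - intros c Hc. destruct (Req_dec c b) as [-> | Hcb']; [exact Hcb|].
    apply (continuity_pt_of_is_derive f c (f' c)), Hf. lra.
  - apply (neg_persistent_of_derive f' f''); assumption.
Qed.

Section RateGap.

Variable theta : R.

Definition nu_root (x : R) : R := sqrt ((theta * x) ^ 2 + 1).

Definition rate_gap (x : R) : R := Lambda_star_nu (theta * x) - rademacher_rate x.

Definition rate_gap' (x : R) : R :=
  theta ^ 2 * x / (nu_root x + 1) - (ln (1 + x) - ln (1 - x)) / 2.

Definition rate_gap'' (x : R) : R :=
  theta ^ 2 / (nu_root x * (nu_root x + 1)) - (/ (1 + x) + / (1 - x)) / 2.

Lemma nu_root_sq (x : R) : nu_root x * nu_root x = (theta * x) ^ 2 + 1.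
Proof. apply sqrt_sqrt. pose proof (pow2_ge_0 (theta * x)). lra. Qed.

Lemma nu_root_ge1 (x : R) : 1 <= nu_root x.
Proof.
  rewrite <- sqrt_1. apply sqrt_le_1_alt. pose proof (pow2_ge_0 (theta * x)). lra.
Qed.

Lemma nu_root_le (x z : R) : 0 <= x <= z -> nu_root x <= nu_root z.
Proof.
  intros Hxz. apply sqrt_le_1_alt.
  assert (x * x <= z * z) by nra.
  replace ((theta * x) ^ 2) with (theta ^ 2 * (x * x)) by ring.
  replace ((theta * z) ^ 2) with (theta ^ 2 * (z * z)) by ring.
  pose proof (pow2_ge_0 theta). nra.
Qed.

Lemma is_derive_rate_gap (x : R) : -1 < x < 1 -> is_derive rate_gap x (rate_gap' x).
Proof.
  intros Hx. pose proof (nu_root_ge1 x).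
  unfold rate_gap, rate_gap', Lambda_star_nu, rademacher_rate. unfold nu_root in *.
  auto_derive; replace (theta * x * (theta * x * 1)) with ((theta * x) ^ 2) by ring.
  - pose proof (pow2_ge_0 (theta * x)). repeat split; lra.
  - set (q := sqrt ((theta * x) ^ 2 + 1)) in *. unfold Rminus. field. repeat split; lra.
Qed.

Lemma is_derive_rate_gap' (x : R) : -1 < x < 1 -> is_derive rate_gap' x (rate_gap'' x).
Proof.
  intros Hx. pose proof (nu_root_ge1 x). pose proof (nu_root_sq x).
  unfold rate_gap', rate_gap''. unfold nu_root in *.
  auto_derive; replace (theta * x * (theta * x * 1)) with ((theta * x) ^ 2) by ring.
  - pose proof (pow2_ge_0 (theta * x)). repeat split; lra.
  - set (q := sqrt ((theta * x) ^ 2 + 1)) in *.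
    match goal with |- ?lhs = _ =>
      replace lhs with (theta ^ 2 / (q + 1) - theta ^ 2 * (theta * x) ^ 2 / (q * (q + 1) ^ 2)
                        - (/ (1 + x) + / (1 - x)) / 2)
        by (unfold Rminus; field; repeat split; lra) end.
    replace ((theta * x) ^ 2) with (q * q - 1) by lra.
    field. repeat split; lra.
Qed.

Lemma rate_gap''_eq (x : R) : -1 < x < 1 ->
  rate_gap'' x = (theta ^ 2 + 1 - 2 * nu_root x ^ 2 - nu_root x)
                 / (nu_root x * (nu_root x + 1) * (1 - x ^ 2)).
Proof.
  intros Hx. pose proof (nu_root_ge1 x) as Hq1. pose proof (nu_root_sq x) as Hq.
  unfold rate_gap''. set (q := nu_root x) in *.
  assert (Hth : theta ^ 2 * (1 - x ^ 2) = theta ^ 2 + 1 - q * q).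
  { rewrite Hq. ring. }
  transitivity ((theta ^ 2 * (1 - x ^ 2) - q * (q + 1)) / (q * (q + 1) * (1 - x ^ 2))).
  - field. repeat split; nra.
  - rewrite Hth. f_equal. ring.
Qed.

(* Only the numerator of [rate_gap''_eq] can change sign, and it decreases as
   [nu_root] increases. *)
Lemma rate_gap''_neg_persistent : neg_persistent rate_gap'' 0 1.
Proof.
  intros c z Hc Hcz Hneg.
  rewrite rate_gap''_eq in * by lra.
  pose proof (nu_root_ge1 c). pose proof (nu_root_ge1 z).
  pose proof (nu_root_le c z ltac:(lra)).
  assert (Dc : 0 < nu_root c * (nu_root c + 1) * (1 - c ^ 2))
    by (apply Rmult_lt_0_compat; nra).
  assert (Dz : 0 < nu_root z * (nu_root z + 1) * (1 - z ^ 2))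
    by (apply Rmult_lt_0_compat; nra).
  assert (Nc : theta ^ 2 + 1 - 2 * nu_root c ^ 2 - nu_root c < 0).
  { apply Rnot_le_lt. intros N. apply (Rlt_not_le _ _ Hneg), Rdiv_le_0_compat; lra. }
  apply Rdiv_neg_pos; [nra | exact Dz].
Qed.

Lemma continuity_pt_rate_gap_1 : continuity_pt rate_gap 1.
Proof.
  apply continuity_pt_minus; [| exact continuity_pt_rademacher_rate_1].
  apply derivable_continuous_pt, ex_derive_Reals_0.
  pose proof (nu_root_ge1 1). unfold Lambda_star_nu, nu_root in *.
  auto_derive. pose proof (pow2_ge_0 (theta * 1)).
  replace (theta * 1 * (theta * 1 * 1)) with ((theta * 1) ^ 2) by ring.
  repeat split; lra.
Qed.

Lemma rate_gap_0 : rate_gap 0 = 0.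
Proof.
  unfold rate_gap, Lambda_star_nu, rademacher_rate. rewrite Rmult_0_r.
  replace (0 ^ 2 + 1) with 1 by ring. rewrite sqrt_1.
  replace ((1 + 1) / 2) with 1 by field. rewrite Rplus_0_r, Rminus_0_r, ln_1. ring.
Qed.

Lemma rate_gap'_0 : rate_gap' 0 = 0.
Proof.
  pose proof (nu_root_ge1 0). unfold rate_gap'.
  rewrite Rplus_0_r, Rminus_0_r, ln_1. field. lra.
Qed.

Lemma rate_gap_1 : Lambda_star_nu theta = ln 2 -> rate_gap 1 = 0.
Proof.
  intros Hln2. unfold rate_gap, rademacher_rate. rewrite Rmult_1_r, Hln2.
  replace (1 - 1) with 0 by ring. replace (1 + 1) with 2 by ring. field.
Qed.

Lemma rate_gap_ge0 : Lambda_star_nu theta = ln 2 ->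
  forall x, 0 <= x <= 1 -> 0 <= rate_gap x.
Proof.
  intros Hln2.
  apply (ge0_of_neg_persistent_derive2 rate_gap rate_gap' rate_gap'').
  - intros c Hc. apply is_derive_rate_gap. lra.
  - intros c Hc. apply is_derive_rate_gap'. lra.
  - exact continuity_pt_rate_gap_1.
  - exact rate_gap_0.
  - exact (rate_gap_1 Hln2).
  - exact rate_gap'_0.
  - exact rate_gap''_neg_persistent.
Qed.

End RateGap.

Theorem lemma6 (theta : R) (Htheta : 0 < theta)
  (Hln2 : Lambda_star_nu theta = ln 2) :
  forall x : R, 0 <= x <= 1 ->
    legendre ln_cosh x
      = Finite ((1/2) * ((1 + x) * ln (1 + x) + (1 - x) * ln (1 - x)))
    /\ Rbar_le (legendre ln_cosh x) (Finite (Lambda_star_nu (theta * x))).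
Proof.
  intros x Hx.
  rewrite legendre_ln_cosh by lra.
  split; [reflexivity|].
  pose proof (rate_gap_ge0 theta Hln2 x Hx) as Hgap.
  unfold rate_gap in Hgap. simpl. lra.
Qed.
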